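(* Let $A=[a_{ij}]\in\mathcal{M}_3(\mathbb{H})$ be a strictly upper triangular (hence nilpotent) matrix. Then $W(A)$ is a closed disk centered at the origin if and only if $A$ is cycle-free, i.e. if and only if $a_{12}a_{13}a_{23}=0$ (at least one of $a_{12},a_{13},a_{23}$ vanishes).
   Context: $\mathbb{H}$ denotes the real quaternions. The numerical range of $A\in\mathcal{M}_n(\mathbb{H})$ is $W(A)=\{\mathbf{x}^*A\mathbf{x}:\mathbf{x}\in\mathbb{H}^n,\ \mathbf{x}^*\mathbf{x}=1\}$; a closed disk centered at the origin is $\{q\in\mathbb{H}:|q|\le r\}$ for some $r\ge0$. The graph $\mathcal{G}_A$ of $A=[a_{ij}]$ is the undirected graph on $\{1,\dots,n\}$ with an edge between $i$ and $j$ (a loop if $i=j$) whenever $a_{ij}\ne0$ or $a_{ji}\ne0$; $A$ is cycle-free if $\mathcal{G}_A$ contains no cycle. *)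

(* Quaternions over an arbitrary real closed field R
   (the paper's H is the case R = the reals). *)
From HB Require Import structures.
From mathcomp Require Import all_boot all_order all_algebra.
Set Implicit Arguments. Unset Strict Implicit. Unset Printing Implicit Defensive.
Import Order.TTheory GRing.Theory Num.Theory.
Local Open Scope ring_scope.

Section Quat.
Variable R : rcfType.

(* q = q0 + q1 i + q2 j + q3 k *)
Record quat := Quat { q0 : R; q1 : R; q2 : R; q3 : R }.

Definition quat_to (q : quat) := (q0 q, q1 q, q2 q, q3 q).
Definition quat_of (t : R * R * R * R) :=
  let: (a, b, c, d) := t in Quat a b c d.
Lemma quat_toK : cancel quat_to quat_of. Proof. by case. Qed.
HB.instance Definition _ := Equality.copy quat (can_type quat_toK).

Definition qzero : quat := Quat 0 0 0 0.
Definition qadd (p q : quat) : quat :=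
  Quat (q0 p + q0 q) (q1 p + q1 q) (q2 p + q2 q) (q3 p + q3 q).
Definition qmul (p q : quat) : quat :=
  Quat (q0 p * q0 q - q1 p * q1 q - q2 p * q2 q - q3 p * q3 q)
       (q0 p * q1 q + q1 p * q0 q + q2 p * q3 q - q3 p * q2 q)
       (q0 p * q2 q - q1 p * q3 q + q2 p * q0 q + q3 p * q1 q)
       (q0 p * q3 q + q1 p * q2 q - q2 p * q1 q + q3 p * q0 q).
Definition qconj (q : quat) : quat := Quat (q0 q) (- q1 q) (- q2 q) (- q3 q).
Definition qnorm2 (q : quat) : R := q0 q ^+ 2 + q1 q ^+ 2 + q2 q ^+ 2 + q3 q ^+ 2.
Definition qnorm (q : quat) : R := Num.sqrt (qnorm2 q).

Definition vnorm2 n (x : 'I_n -> quat) : R := \sum_(i < n) qnorm2 (x i).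

Definition quadform n (A : 'M[quat]_n) (x : 'I_n -> quat) : quat :=
  \big[qadd/qzero]_(i < n) \big[qadd/qzero]_(j < n)
     qmul (qmul (qconj (x i)) (A i j)) (x j).

Definition numrange n (A : 'M[quat]_n) (q : quat) : Prop :=
  exists x : 'I_n -> quat, vnorm2 x = 1 /\ quadform A x = q.

Definition is_closed_disk0 (S : quat -> Prop) : Prop :=
  exists r : R, 0 <= r /\ forall q, S q <-> qnorm q <= r.

Definition graph_edge n (A : 'M[quat]_n) : rel 'I_n :=
  fun i j => (A i j != qzero) || (A j i != qzero).

Definition cycle_free n (A : 'M[quat]_n) : Prop :=
  (forall i, ~~ graph_edge A i i) /\
  (forall s : seq 'I_n, uniq s -> (3 <= size s)%N -> ~~ cycle (graph_edge A) s).

Definition strictly_upper n (A : 'M[quat]_n) : Prop :=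
  forall i j : 'I_n, (j <= i)%N -> A i j = qzero.

End Quat.

(* 1-based indices 1,2,3 of the paper as elements of 'I_3 *)
Definition i1 : 'I_3 := @Ordinal 3 0 isT.
Definition i2 : 'I_3 := @Ordinal 3 1 isT.
Definition i3 : 'I_3 := @Ordinal 3 2 isT.

From HB Require Import structures.
From mathcomp Require Import all_boot all_order all_algebra.
From mathcomp Require Import ring lra.
Set Implicit Arguments. Unset Strict Implicit. Unset Printing Implicit Defensive.
Import Order.TTheory GRing.Theory Num.Theory.
Local Open Scope ring_scope.

(* Write a = a12, b = a13, c = a23.  For strictly upper triangular A,
   x^* A x = x1^* a x2 + x1^* b x3 + x2^* c x3 =: f(x1, x2, x3), so W(A) is the
   range of f on the unit sphere of H^3 ([numrange_upper3]).  G_A has no loops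
   and its only possible cycle is the triangle 1-2-3, so A is cycle-free iff one
   of a, b, c vanishes ([cycle_free_upper3]), iff abc = 0 as H has no zero
   divisors ([qmul_eq0]).  Let s = sqrt((|a|^2 + |b|^2 + |c|^2)/4).
   - If c = 0 or b = 0, a Cauchy-Schwarz estimate gives |f| <= s on the unit
     sphere and explicit vectors attain every q with |q| <= s, so W is the disk
     of radius s.  The case a = 0 follows from c = 0 by the symmetry
     conj f_{a,b,c}(x1, x2, x3) = f_{conj c, conj b, conj a}(x3, x2, x1).
   - If a, b, c are all nonzero, rotating the coordinates by unit quaternions
     aligns the phases of the three terms, reducing to a real form which takes
     a value of modulus > s.  A sum-of-squares identity shows Re f <= s when
     <ac, b> <= 0 (and Re f >= -s otherwise), so W misses a real point of the
     disk through that value: W is not a disk. *)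

Lemma quat_ext (R : rcfType) (p q : quat R) :
  q0 p = q0 q -> q1 p = q1 q -> q2 p = q2 q -> q3 p = q3 q -> p = q.
Proof. by case: p; case: q => /= ???? ???? -> -> -> ->. Qed.

Ltac quat_ring :=
  repeat match goal with x : quat _ |- _ => case: x => ???? end;
  first [apply: quat_ext; rewrite /=; ring | rewrite /=; ring].

Section QuaternionAlgebra.
Variable R : rcfType.
Implicit Types (p q u v x y a b c : quat R) (k l : R).

Definition qone : quat R := Quat 1 0 0 0.
Definition qscale k q := Quat (k * q0 q) (k * q1 q) (k * q2 q) (k * q3 q).
Definition qdot p q : R := q0 p * q0 q + q1 p * q1 q + q2 p * q2 q + q3 p * q3 q.

Lemma qmulA p q v : qmul (qmul p q) v = qmul p (qmul q v). Proof. quat_ring. Qed.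
Lemma qmul1l p : qmul qone p = p. Proof. quat_ring. Qed.
Lemma qmul_scalel k p q : qmul (qscale k p) q = qscale k (qmul p q). Proof. quat_ring. Qed.
Lemma qmul_scaler k p q : qmul p (qscale k q) = qscale k (qmul p q). Proof. quat_ring. Qed.
Lemma qmulDl p q v : qmul (qadd p q) v = qadd (qmul p v) (qmul q v). Proof. quat_ring. Qed.
Lemma qscaleA k l p : qscale k (qscale l p) = qscale (k * l) p. Proof. quat_ring. Qed.
Lemma qscale1 p : qscale 1 p = p. Proof. quat_ring. Qed.
Lemma qscaleDl k l p : qadd (qscale k p) (qscale l p) = qscale (k + l) p.
Proof. quat_ring. Qed.
Lemma qconjM p q : qconj (qmul p q) = qmul (qconj q) (qconj p). Proof. quat_ring. Qed.
Lemma qconjK p : qconj (qconj p) = p. Proof. quat_ring. Qed.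
Lemma qconj1 : qconj qone = qone. Proof. quat_ring. Qed.
Lemma qconj_scale k p : qconj (qscale k p) = qscale k (qconj p). Proof. quat_ring. Qed.

(* p p^* = p^* p = |p|^2, in the form used to cancel conjugate pairs *)
Lemma qmul_conjr p q : qmul p (qmul (qconj p) q) = qscale (qnorm2 p) q.
Proof. rewrite /qnorm2; quat_ring. Qed.
Lemma qmul_conjl p q : qmul (qconj p) (qmul p q) = qscale (qnorm2 p) q.
Proof. rewrite /qnorm2; quat_ring. Qed.

Lemma qnorm2M p q : qnorm2 (qmul p q) = qnorm2 p * qnorm2 q.
Proof. rewrite /qnorm2; quat_ring. Qed.
Lemma qnorm2_conj p : qnorm2 (qconj p) = qnorm2 p. Proof. rewrite /qnorm2; quat_ring. Qed.
Lemma qnorm2_scale k p : qnorm2 (qscale k p) = k ^+ 2 * qnorm2 p.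
Proof. rewrite /qnorm2; quat_ring. Qed.
Lemma qnorm2D p q : qnorm2 (qadd p q) = qnorm2 p + qnorm2 q + 2 * qdot p q.
Proof. rewrite /qnorm2 /qdot; quat_ring. Qed.
Lemma qnorm2_one : qnorm2 qone = 1. Proof. rewrite /qnorm2 /=; ring. Qed.
Lemma qnorm2_zero : qnorm2 (qzero R) = 0. Proof. rewrite /qnorm2 /=; ring. Qed.

Lemma qdotDl p q v : qdot (qadd q v) p = qdot q p + qdot v p.
Proof. rewrite /qdot; quat_ring. Qed.
Lemma qdotDr p q v : qdot p (qadd q v) = qdot p q + qdot p v.
Proof. rewrite /qdot; quat_ring. Qed.
Lemma qdot_scalel k p q : qdot (qscale k p) q = k * qdot p q.
Proof. rewrite /qdot; quat_ring. Qed.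
Lemma qdot_scaler k p q : qdot p (qscale k q) = k * qdot p q.
Proof. rewrite /qdot; quat_ring. Qed.
Lemma qdot_adj u a v : qdot u (qmul (qconj a) v) = qdot (qmul a u) v.
Proof. rewrite /qdot; quat_ring. Qed.
Lemma q0_conj_mul x a y : q0 (qmul (qmul (qconj x) a) y) = qdot x (qmul a y).
Proof. rewrite /qdot; quat_ring. Qed.

Lemma qnorm2_ge0 p : 0 <= qnorm2 p.
Proof. rewrite /qnorm2; case: p => ????; rewrite /=; nra. Qed.

Lemma qnorm2_eq0 p : qnorm2 p = 0 -> p = qzero R.
Proof.
case: p => x y z w; rewrite /qnorm2 /= => h.
have sq0 (t : R) : t ^+ 2 = 0 -> t = 0 by move/eqP; rewrite sqrf_eq0 => /eqP.
have hx : x = 0 by apply: sq0; nra.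
have hy : y = 0 by apply: sq0; nra.
have hz : z = 0 by apply: sq0; nra.
have hw : w = 0 by apply: sq0; nra.
by rewrite hx hy hz hw.
Qed.

Lemma qnorm2_gt0 p : p <> qzero R -> 0 < qnorm2 p.
Proof. by move=> p0; rewrite lt_def qnorm2_ge0 andbT; apply/eqP => /qnorm2_eq0. Qed.

Lemma qmul_eq0 p q : qmul p q = qzero R <-> p = qzero R \/ q = qzero R.
Proof.
split; last by case=> ->; quat_ring.
move=> pq0; have /esym/eqP := qnorm2M p q; rewrite pq0 qnorm2_zero mulf_eq0.
by case/orP => /eqP/qnorm2_eq0; tauto.
Qed.

Lemma qnorm_sqr q : qnorm q ^+ 2 = qnorm2 q.
Proof. by rewrite sqr_sqrtr ?qnorm2_ge0. Qed.

Lemma qnorm_gt0 q : q <> qzero R -> 0 < qnorm q.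
Proof. by move=> q0; rewrite sqrtr_gt0 qnorm2_gt0. Qed.

Lemma qnorm_real k : qnorm (Quat k 0 0 0) = `|k|.
Proof. by rewrite /qnorm -sqrtr_sqr /qnorm2 /=; congr Num.sqrt; ring. Qed.

Lemma qdot_CS u v : qdot u v ^+ 2 <= qnorm2 u * qnorm2 v.
Proof.
have h := qnorm2_ge0 (qadd (qscale (qnorm2 v) u) (qscale (- qdot u v) v)).
rewrite qnorm2D !qnorm2_scale qdot_scalel qdot_scaler in h.
have hv := qnorm2_ge0 v; have hu := qnorm2_ge0 u.
case: (ltrgt0P (qnorm2 v)) => [vp|vn|/qnorm2_eq0 v0]; [nra | lra |].
by rewrite v0 /qdot qnorm2_zero /=; nra.
Qed.

(* Triangle-type bound: if |u|^2 |v|^2 = P Q with P, Q >= 0, then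
   |u + v|^2 <= |u|^2 + |v|^2 + P + Q  (Cauchy-Schwarz and AM-GM). *)
Lemma qnorm2D_le u v P Q : 0 <= P -> 0 <= Q -> qnorm2 u * qnorm2 v = P * Q ->
  qnorm2 (qadd u v) <= qnorm2 u + qnorm2 v + P + Q.
Proof.
move=> P0 Q0 uvPQ; rewrite qnorm2D.
have := qdot_CS u v; rewrite uvPQ => CS.
suff : 2 * qdot u v <= P + Q by lra.
rewrite leNgt; apply/negP => lt.
have : (P + Q) ^+ 2 < (2 * qdot u v) ^+ 2 by rewrite ltr_pXn2r // ?nnegrE; lra.
have := sqr_ge0 (P - Q); nra.
Qed.

End QuaternionAlgebra.
Arguments qone {R}.

Section Disks.
Variable R : rcfType.
Implicit Types (S T : quat R -> Prop).

Lemma disk_ext S T : (forall q, S q <-> T q) ->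
  is_closed_disk0 S -> is_closed_disk0 T.
Proof. by move=> ST [r [r0 Sr]]; exists r; split=> // q; rewrite -ST. Qed.

Lemma disk_conj S : is_closed_disk0 S -> is_closed_disk0 (fun q => S (qconj q)).
Proof. by case=> r [r0 Sr]; exists r; split=> // q; rewrite Sr /qnorm qnorm2_conj. Qed.

Lemma disk_of_norm2 S (M : R) : 0 <= M -> (forall q, S q <-> qnorm2 q <= M) ->
  is_closed_disk0 S.
Proof.
move=> M0 SM; exists (Num.sqrt M); split=> [|q]; first exact: sqrtr_ge0.
by rewrite SM /qnorm ler_psqrt ?nnegrE ?qnorm2_ge0.
Qed.

End Disks.

Section UpperTriangular3.
Variable R : rcfType.
Implicit Types (q x y z a b c : quat R).

(* x^* A x for the strictly upper triangular A with a12 = a, a13 = b, a23 = c *)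
Definition triform a b c (x1 x2 x3 : quat R) : quat R :=
  qadd (qadd (qmul (qmul (qconj x1) a) x2) (qmul (qmul (qconj x1) b) x3))
       (qmul (qmul (qconj x2) c) x3).

Definition trirange a b c q : Prop := exists x1 x2 x3,
  qnorm2 x1 + qnorm2 x2 + qnorm2 x3 = 1 /\ triform a b c x1 x2 x3 = q.

(* The enumeration of 'I_3 produced by unfolding big operators. *)
Lemma ord3_1 : (ord0 : 'I_3) = i1. Proof. exact: val_inj. Qed.
Lemma ord3_2 : lift ord0 (ord0 : 'I_2) = i2. Proof. exact: val_inj. Qed.
Lemma ord3_3 : lift ord0 (lift ord0 (ord0 : 'I_1)) = i3. Proof. exact: val_inj. Qed.

Lemma ord3_cases (i : 'I_3) : i = i1 \/ i = i2 \/ i = i3.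
Proof.
case: i => [[|[|[|m]]] im] //.
- by left; apply: val_inj.
- by right; left; apply: val_inj.
- by right; right; apply: val_inj.
Qed.

Lemma vnorm2_3 (x : 'I_3 -> quat R) :
  vnorm2 x = qnorm2 (x i1) + qnorm2 (x i2) + qnorm2 (x i3).
Proof.
by rewrite /vnorm2 !big_ord_recl big_ord0 /= ord3_3 ord3_2 ord3_1 addr0 addrA.
Qed.

Lemma quadform_upper3 (A : 'M[quat R]_3) (x : 'I_3 -> quat R) : strictly_upper A ->
  quadform A x = triform (A i1 i2) (A i1 i3) (A i2 i3) (x i1) (x i2) (x i3).
Proof.
move=> Aup; rewrite /quadform !big_ord_recl !big_ord0 /= ord3_3 ord3_2 ord3_1.
rewrite !(Aup i1 i1) ?(Aup i2 i1) ?(Aup i2 i2) ?(Aup i3 i1) ?(Aup i3 i2) ?(Aup i3 i3) //.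
move: (A _ _) (A _ _) (A _ _) (x _) (x _) (x _) => a b c y1 y2 y3.
rewrite /triform; quat_ring.
Qed.

Lemma numrange_upper3 (A : 'M[quat R]_3) q : strictly_upper A ->
  numrange A q <-> trirange (A i1 i2) (A i1 i3) (A i2 i3) q.
Proof.
move=> Aup; split=> [[x [x_unit <-]]|[x1 [x2 [x3 [x_unit xq]]]]].
  by exists (x i1), (x i2), (x i3); rewrite -vnorm2_3 -quadform_upper3.
exists (fun i : 'I_3 => if val i == 0%N then x1 else if val i == 1%N then x2 else x3).
by rewrite vnorm2_3 quadform_upper3.
Qed.

(* The only candidate cycle of G_A is the triangle 1-2-3. *)
Lemma cycle_free_upper3 (A : 'M[quat R]_3) : strictly_upper A ->
  cycle_free A <-> A i1 i2 = qzero R \/ A i1 i3 = qzero R \/ A i2 i3 = qzero R.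
Proof.
move=> Aup; have a21 := Aup i2 i1 isT; have a31 := Aup i3 i1 isT.
have a32 := Aup i3 i2 isT; split.
  case=> _ nocycle.
  case: (eqVneq (A i1 i2) (qzero R)) => [|a0]; first by left.
  case: (eqVneq (A i1 i3) (qzero R)) => [|b0]; first by right; left.
  case: (eqVneq (A i2 i3) (qzero R)) => [|c0]; first by right; right.
  by have := nocycle [:: i1; i2; i3] isT isT; rewrite /= /graph_edge a0 b0 c0 orbT.
move=> abc0; split=> [i|s s_uniq]; first by rewrite /graph_edge (Aup i i) // eqxx.
have : (size s <= 3)%N.
  by rewrite -(card_uniqP s_uniq); apply: leq_trans (max_card _) _; rewrite card_ord.
case: s s_uniq => [|x [|y [|z [|w s]]]] //= s_uniq _ _; move: s_uniq.
case: (ord3_cases x) => [->|[->|->]]; case: (ord3_cases y) => [->|[->|->]];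
 case: (ord3_cases z) => [->|[->|->]] => //=;
 rewrite /graph_edge ?a21 ?a31 ?a32 ?eqxx /= ?orbF;
 by case: abc0 => [->|[->|->]]; rewrite ?eqxx ?andbF.
Qed.

End UpperTriangular3.

Section DiskCases.
Variable R : rcfType.
Implicit Types (q x y z a b c : quat R).

Lemma qconj_triform a b c x y z :
  qconj (triform a b c x y z) = triform (qconj c) (qconj b) (qconj a) z y x.
Proof. rewrite /triform; quat_ring. Qed.

Lemma trirange_conj a b c q :
  trirange (qconj c) (qconj b) (qconj a) q <-> trirange a b c (qconj q).
Proof.
split=> [[x [y [z [xyz <-]]]]|[x [y [z [xyz fq]]]]].
  by exists z, y, x; rewrite qconj_triform !qconjK; split=> //; lra.
by exists z, y, x; rewrite -qconj_triform fq qconjK; split=> //; lra.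
Qed.

Lemma trirange0 a b c : trirange a b c (qzero R).
Proof.
exists qone, (qzero R), (qzero R); rewrite qnorm2_one qnorm2_zero.
by split; [ring | rewrite /triform; quat_ring].
Qed.

Lemma le_quarter (n m K : R) : n + m = 1 -> 0 <= K -> n * K * m <= K / 4.
Proof. by move=> nm K0; have := mulr_ge0 K0 (sqr_ge0 (n - m)); nra. Qed.

(* Scalars realizing a prescribed value: the witnesses used below have squared
   norm t^2 + k^2 D N and produce the value t k D times the target. *)
Lemma fill_scalars (D N : R) : 0 < D -> 0 <= N -> N <= D / 4 ->
  exists t k : R, t * k * D = 1 /\ t ^+ 2 + k ^+ 2 * D * N = 1.
Proof.
move=> D0 N0 ND.
have disc0 : 0 <= 1 - 4 * N / D by rewrite subr_ge0 ler_pdivrMr // mul1r; lra.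
set d := Num.sqrt (1 - 4 * N / D).
have d0 : 0 <= d by apply: sqrtr_ge0.
have d2 : d ^+ 2 = 1 - 4 * N / D by rewrite sqr_sqrtr.
set t := Num.sqrt ((1 + d) / 2).
have t0 : 0 < t by rewrite sqrtr_gt0 divr_gt0 //; lra.
have t2 : t ^+ 2 = (1 + d) / 2 by rewrite sqr_sqrtr // divr_ge0 //; lra.
have t_neq0 : t != 0 by rewrite gt_eqF.
have D_neq0 : D != 0 by rewrite gt_eqF.
have d1_neq0 : 1 + d != 0 by rewrite gt_eqF //; lra.
exists t, (1 / (t * D)); split; first by field; rewrite t_neq0 D_neq0.
have -> : (1 / (t * D)) ^+ 2 * D * N = N / D / t ^+ 2 by field; rewrite t_neq0 D_neq0.
have -> : N / D = (1 - d ^+ 2) / 4 by rewrite d2; field.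
by rewrite t2; field.
Qed.

Lemma trirange_disk a b c (D : R) : 0 <= D ->
  (forall x y z, qnorm2 x + qnorm2 y + qnorm2 z = 1 ->
     qnorm2 (triform a b c x y z) <= D / 4) ->
  (0 < D -> forall q, qnorm2 q <= D / 4 -> trirange a b c q) ->
  is_closed_disk0 (trirange a b c).
Proof.
move=> D0 bound fill; apply: (@disk_of_norm2 _ _ (D / 4)); first exact: divr_ge0.
move=> q; split=> [[x [y [z [xyz <-]]]]|qD]; first exact: bound.
have [Dpos|D_le0] := ltrP 0 D; first exact: fill.
have D_eq0 : D = 0 by apply/eqP; rewrite eq_le D_le0 D0.
rewrite D_eq0 mul0r in qD; have -> : q = qzero R.
  by apply: qnorm2_eq0; apply/eqP; rewrite eq_le qD qnorm2_ge0.
exact: trirange0.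
Qed.

Lemma trirange_disk_c0 a b : is_closed_disk0 (trirange a b (qzero R)).
Proof.
have ga := qnorm2_ge0 a; have gb := qnorm2_ge0 b.
apply: (@trirange_disk _ _ _ (qnorm2 a + qnorm2 b)); first lra.
  move=> x y z xyz.
  have -> : triform a b (qzero R) x y z = qmul (qconj x) (qadd (qmul a y) (qmul b z)).
    by rewrite /triform; quat_ring.
  have gx := qnorm2_ge0 x; have gy := qnorm2_ge0 y; have gz := qnorm2_ge0 z.
  have yz_le : qnorm2 (qadd (qmul a y) (qmul b z)) <=
               (qnorm2 a + qnorm2 b) * (qnorm2 y + qnorm2 z).
    apply: le_trans (qnorm2D_le (mulr_ge0 ga gz) (mulr_ge0 gb gy) _) _;
      rewrite !qnorm2M; [ring | lra].
  rewrite qnorm2M qnorm2_conj.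
  have xyz' : qnorm2 x + (qnorm2 y + qnorm2 z) = 1 by rewrite -xyz addrA.
  have := le_quarter xyz' (addr_ge0 ga gb); have := ler_wpM2l gx yz_le; lra.
move=> Dpos q qD; have [t [k [tkD xyz]]] := fill_scalars Dpos (qnorm2_ge0 q) qD.
exists (qscale t qone), (qscale k (qmul (qconj a) q)), (qscale k (qmul (qconj b) q)).
split; first by rewrite !qnorm2_scale !qnorm2M !qnorm2_conj qnorm2_one -[RHS]xyz; ring.
rewrite -[RHS]qscale1 -tkD /triform /qnorm2; quat_ring.
Qed.

Lemma trirange_disk_b0 a c : is_closed_disk0 (trirange a (qzero R) c).
Proof.
have ga := qnorm2_ge0 a; have gc := qnorm2_ge0 c.
apply: (@trirange_disk _ _ _ (qnorm2 a + qnorm2 c)); first lra.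
  move=> x y z xyz.
  have -> : triform a (qzero R) c x y z =
            qadd (qmul (qmul (qconj x) a) y) (qmul (qmul (qconj y) c) z).
    by rewrite /triform; quat_ring.
  have gx := qnorm2_ge0 x; have gy := qnorm2_ge0 y; have gz := qnorm2_ge0 z.
  apply: le_trans (qnorm2D_le (P := qnorm2 y * qnorm2 a * qnorm2 z)
                              (Q := qnorm2 y * qnorm2 c * qnorm2 x) _ _ _) _.
  - by rewrite !mulr_ge0.
  - by rewrite !mulr_ge0.
  - by rewrite !qnorm2M !qnorm2_conj; ring.
  have xyz' : qnorm2 y + (qnorm2 x + qnorm2 z) = 1 by rewrite -xyz; ring.
  by have := le_quarter xyz' (addr_ge0 ga gc); rewrite !qnorm2M !qnorm2_conj; lra.
move=> Dpos q qD; have [t [k [tkD xyz]]] := fill_scalars Dpos (qnorm2_ge0 q) qD.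
exists (qscale k (qmul a (qconj q))), (qscale t qone), (qscale k (qmul (qconj c) q)).
split; first by rewrite !qnorm2_scale !qnorm2M !qnorm2_conj qnorm2_one -[RHS]xyz; ring.
rewrite -[RHS]qscale1 -tkD /triform /qnorm2; quat_ring.
Qed.

(* Case a12 = 0, by conjugation symmetry from the case a23 = 0. *)
Lemma trirange_disk_a0 b c : is_closed_disk0 (trirange (qzero R) b c).
Proof.
apply: (disk_ext _ (disk_conj (trirange_disk_c0 (qconj c) (qconj b)))) => q.
have conj0 : qconj (qzero R) = qzero R by quat_ring.
by rewrite /= -trirange_conj !qconjK conj0.
Qed.

End DiskCases.

Section NotDisk.
Variable R : rcfType.
Implicit Types (q x y z a b c : quat R).

Lemma re_triform a b c x y z :
  q0 (triform a b c x y z) = qdot x (qmul a y) + qdot x (qmul b z) + qdot y (qmul c z).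
Proof.
have q0_add p q : q0 (qadd p q) = q0 p + q0 q by [].
by rewrite /triform !q0_add !q0_conj_mul.
Qed.

(* Sum-of-squares identity behind the bound on Re x^* A x: with
   4 s^2 = |a|^2 + |b|^2 + |c|^2 and P = |b|^2 + |c|^2,
   P |2s x - a y - b z|^2 + |P y - (2s c + a^* b) z|^2 - 4 s <ac, b> |z|^2
     = 4 s P (s |(x,y,z)|^2 - Re x^* A x). *)
Lemma re_triform_sos a b c x y z (s : R) :
  4 * s ^+ 2 = qnorm2 a + qnorm2 b + qnorm2 c ->
  let P := qnorm2 b + qnorm2 c in
  let V1 := qadd (qscale (2 * s) x) (qscale (-1) (qadd (qmul a y) (qmul b z))) in
  let V2 := qadd (qscale P y)
                 (qscale (-1) (qmul (qadd (qscale (2 * s) c) (qmul (qconj a) b)) z)) in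
  P * qnorm2 V1 + qnorm2 V2 - 4 * s * qdot (qmul a c) b * qnorm2 z =
  4 * s * P * (s * (qnorm2 x + qnorm2 y + qnorm2 z) - q0 (triform a b c x y z)).
Proof.
move=> s2 P V1 V2; rewrite re_triform.
have -> : qnorm2 V1 = 4 * s ^+ 2 * qnorm2 x
   - 4 * s * (qdot x (qmul a y) + qdot x (qmul b z))
   + (qnorm2 a * qnorm2 y + qnorm2 b * qnorm2 z + 2 * qdot (qmul a y) (qmul b z)).
  by rewrite /V1 !(qnorm2D, qnorm2_scale, qnorm2M, qdot_scalel, qdot_scaler,
    qdotDr, qdotDl); ring.
have -> : qnorm2 V2 = P ^+ 2 * qnorm2 y
   - 2 * P * (2 * s * qdot y (qmul c z) + qdot (qmul a y) (qmul b z))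
   + (4 * s ^+ 2 * qnorm2 c + qnorm2 a * qnorm2 b + 4 * s * qdot (qmul a c) b)
     * qnorm2 z.
  by rewrite /V2 !(qnorm2D, qnorm2_scale, qnorm2M, qdot_scalel, qdot_scaler,
    qdotDr, qdotDl, qmulDl, qmul_scalel, qnorm2_conj, qmulA, qdot_adj); ring.
rewrite /P; have -> : qnorm2 c = 4 * s ^+ 2 - qnorm2 a - qnorm2 b by rewrite s2; ring.
ring.
Qed.

Lemma re_triform_le a b c x y z (s : R) : 0 < s ->
  4 * s ^+ 2 = qnorm2 a + qnorm2 b + qnorm2 c -> 0 < qnorm2 b + qnorm2 c ->
  qdot (qmul a c) b <= 0 ->
  q0 (triform a b c x y z) <= s * (qnorm2 x + qnorm2 y + qnorm2 z).
Proof.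
move=> s0 s2 P0 acb.
move: (re_triform_sos x y z s2) => /[let] P /[let] V1 /[let] V2 sos.
have sos_ge0 : 0 <= 4 * s * P * (s * (qnorm2 x + qnorm2 y + qnorm2 z) -
                                 q0 (triform a b c x y z)).
  rewrite -sos; have := mulr_ge0 (ltW P0) (qnorm2_ge0 V1).
  have := qnorm2_ge0 V2.
  have : 0 <= 4 * s * - qdot (qmul a c) b * qnorm2 z.
    by rewrite !mulr_ge0 ?qnorm2_ge0 //; lra.
  rewrite /P; lra.
by rewrite -subr_ge0 -(pmulr_rge0 _ (_ : 0 < 4 * s * P)) // !mulr_gt0.
Qed.

Lemma triform_opp a b c x y z :
  triform (qscale (-1) a) (qscale (-1) b) (qscale (-1) c) x y z =
  qscale (-1) (triform a b c x y z).
Proof. rewrite /triform; quat_ring. Qed.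

(* The symmetric bound, from (a, b, c) -> -(a, b, c). *)
Lemma re_triform_ge a b c x y z (s : R) : 0 < s ->
  4 * s ^+ 2 = qnorm2 a + qnorm2 b + qnorm2 c -> 0 < qnorm2 b + qnorm2 c ->
  0 <= qdot (qmul a c) b ->
  - (s * (qnorm2 x + qnorm2 y + qnorm2 z)) <= q0 (triform a b c x y z).
Proof.
move=> s0 s2 P0 acb.
have := @re_triform_le (qscale (-1) a) (qscale (-1) b) (qscale (-1) c) x y z s s0.
rewrite triform_opp !qnorm2_scale qmul_scalel qmul_scaler qscaleA qdot_scalel
  qdot_scaler /=; lra.
Qed.

End NotDisk.

Section LargeValue.
Variable R : rcfType.
Implicit Types (q x y z a b c g : quat R).

(* With g = b c^* a^*, the vectors 1, a^* g^* and (ac)^* g^* g^* make the three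
   terms of x^* A x real multiples of the same quaternion g^*. *)
Lemma triform_aligned a b c g (t1 t2 t3 : R) :
  qmul (qmul b (qconj c)) (qconj a) = g ->
  triform a b c (qscale t1 qone) (qscale t2 (qmul (qconj a) (qconj g)))
     (qscale t3 (qmul (qconj (qmul a c)) (qmul (qconj g) (qconj g)))) =
  qscale (t1 * t2 * qnorm2 a + t1 * t3 * qnorm2 g +
          t2 * t3 * (qnorm2 a * qnorm2 c * qnorm2 g)) (qconj g).
Proof.
move=> def_g; set e := qconj g.
have term12 : qmul (qmul (qconj (qscale t1 qone)) a) (qscale t2 (qmul (qconj a) e)) =
           qscale (t1 * t2 * qnorm2 a) e.
  rewrite !(qconj_scale, qconj1, qmul_scalel, qmul_scaler, qmul1l, qscaleA).
  by rewrite qmul_conjr qscaleA; congr qscale; ring.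
have term13 : qmul (qmul (qconj (qscale t1 qone)) b)
             (qscale t3 (qmul (qconj (qmul a c)) (qmul e e))) =
           qscale (t1 * t3 * qnorm2 g) e.
  rewrite !(qconj_scale, qconj1, qmul_scalel, qmul_scaler, qmul1l, qscaleA) qconjM.
  rewrite -qmulA -[qmul b (qmul (qconj c) (qconj a))]qmulA def_g /e qmul_conjr.
  by rewrite qscaleA; congr qscale; ring.
have term23 : qmul (qmul (qconj (qscale t2 (qmul (qconj a) e))) c)
             (qscale t3 (qmul (qconj (qmul a c)) (qmul e e))) =
           qscale (t2 * t3 * (qnorm2 a * qnorm2 c * qnorm2 g)) e.
  rewrite !(qconj_scale, qmul_scalel, qmul_scaler, qscaleA) !qconjM qconjK !qmulA.
  rewrite qmul_conjr !(qmul_scalel, qmul_scaler, qscaleA) qmul_conjr.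
  rewrite !(qmul_scalel, qmul_scaler, qscaleA) qmul_conjl qscaleA /e qnorm2_conj.
  by congr qscale; ring.
by rewrite /triform term12 term13 term23 !qscaleDl.
Qed.

Lemma real_form_gap (A B C s t1 t2 t3 : R) : 0 < A -> 0 < B -> 0 < C -> 0 < s ->
  4 * s ^+ 2 = A ^+ 2 + B ^+ 2 + C ^+ 2 ->
  t1 = (A ^+ 2 + B ^+ 2) / 4 -> t2 = A * s / 2 + B * C / 4 ->
  t3 = B * s / 2 + A * C / 4 ->
  s * (t1 ^+ 2 + t2 ^+ 2 + t3 ^+ 2) < A * t1 * t2 + B * t1 * t3 + C * t2 * t3.
Proof.
move=> A0 B0 C0 s0 s2 t1E t2E t3E; rewrite -subr_gt0.
have -> : A * t1 * t2 + B * t1 * t3 + C * t2 * t3 - s * (t1 ^+ 2 + t2 ^+ 2 + t3 ^+ 2)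
  = A * B * C * (A ^+ 2 + B ^+ 2) / 16
    - ((A ^+ 2 + B ^+ 2) * s / 4 + A * B * C / 4) *
      (s ^+ 2 - (A ^+ 2 + B ^+ 2 + C ^+ 2) / 4).
  by rewrite t1E t2E t3E; field.
have -> : s ^+ 2 - (A ^+ 2 + B ^+ 2 + C ^+ 2) / 4 = 0 by rewrite -s2; field.
rewrite mulr0 subr0 divr_gt0 // mulr_gt0 ?mulr_gt0 //.
by have := sqr_ge0 B; have := exprn_gt0 2 A0; lra.
Qed.

Lemma real_form_large (A B C : R) : 0 < A -> 0 < B -> 0 < C ->
  exists t1 t2 t3 : R, t1 ^+ 2 + t2 ^+ 2 + t3 ^+ 2 = 1 /\
    Num.sqrt ((A ^+ 2 + B ^+ 2 + C ^+ 2) / 4) < A * t1 * t2 + B * t1 * t3 + C * t2 * t3.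
Proof.
move=> A0 B0 C0; set s := Num.sqrt _.
have D0 : 0 < (A ^+ 2 + B ^+ 2 + C ^+ 2) / 4.
  by rewrite divr_gt0 // !addr_gt0 ?exprn_gt0.
have s0 : 0 < s by rewrite sqrtr_gt0.
have s2 : 4 * s ^+ 2 = A ^+ 2 + B ^+ 2 + C ^+ 2 by rewrite sqr_sqrtr ?ltW //; field.
set u1 := (A ^+ 2 + B ^+ 2) / 4; set u2 := A * s / 2 + B * C / 4.
set u3 := B * s / 2 + A * C / 4.
have gap := real_form_gap A0 B0 C0 s0 s2 (erefl u1) (erefl u2) (erefl u3).
have u1_0 : 0 < u1 by rewrite divr_gt0 // addr_gt0 ?exprn_gt0.
set N := u1 ^+ 2 + u2 ^+ 2 + u3 ^+ 2 in gap.
have N0 : 0 < N.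
  by rewrite /N; have := sqr_ge0 u2; have := sqr_ge0 u3; have := exprn_gt0 2 u1_0; lra.
have nN : N != 0 by rewrite gt_eqF.
set n := Num.sqrt N; have n2 : n ^+ 2 = N by rewrite sqr_sqrtr ?ltW.
have nn : n != 0 by rewrite gt_eqF ?sqrtr_gt0.
exists (u1 / n), (u2 / n), (u3 / n); split.
  have -> : (u1 / n) ^+ 2 + (u2 / n) ^+ 2 + (u3 / n) ^+ 2 = N / n ^+ 2.
    by rewrite /N; field.
  by rewrite n2 divff.
have -> : A * (u1 / n) * (u2 / n) + B * (u1 / n) * (u3 / n) + C * (u2 / n) * (u3 / n)
        = (A * u1 * u2 + B * u1 * u3 + C * u2 * u3) / N by rewrite -n2; field.
by rewrite ltr_pdivlMr.
Qed.

Lemma phase_align a b c : a <> qzero R -> b <> qzero R -> c <> qzero R ->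
  exists u v w e, [/\ qnorm2 u = 1, qnorm2 v = 1, qnorm2 w = 1, qnorm2 e = 1 &
    forall t1 t2 t3 : R,
      triform a b c (qscale t1 u) (qscale t2 v) (qscale t3 w) =
      qscale (qnorm a * t1 * t2 + qnorm b * t1 * t3 + qnorm c * t2 * t3) e].
Proof.
move=> a0 b0 c0; set A := qnorm a; set B := qnorm b; set C := qnorm c.
have nA : A != 0 by rewrite gt_eqF ?qnorm_gt0.
have nB : B != 0 by rewrite gt_eqF ?qnorm_gt0.
have nC : C != 0 by rewrite gt_eqF ?qnorm_gt0.
have aA : qnorm2 a = A ^+ 2 by rewrite qnorm_sqr.
have cC : qnorm2 c = C ^+ 2 by rewrite qnorm_sqr.
set g := qmul (qmul b (qconj c)) (qconj a).
have gG : qnorm2 g = (A * B * C) ^+ 2.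
  by rewrite /g !qnorm2M !qnorm2_conj !exprMn !qnorm_sqr; ring.
have nG : A * B * C != 0 by rewrite !mulf_neq0.
exists qone, (qscale (A * (A * B * C))^-1 (qmul (qconj a) (qconj g))),
  (qscale (A * C * (A * B * C) ^+ 2)^-1
     (qmul (qconj (qmul a c)) (qmul (qconj g) (qconj g)))),
  (qscale (A * B * C)^-1 (qconj g)).
split; first exact: qnorm2_one.
- by rewrite qnorm2_scale qnorm2M !qnorm2_conj gG aA; field; rewrite nA nB nC.
- rewrite qnorm2_scale !qnorm2M !qnorm2_conj qnorm2M gG aA cC.
  by field; rewrite nA nB nC.
- by rewrite qnorm2_scale qnorm2_conj gG; field; rewrite nA nB nC.
move=> t1 t2 t3; rewrite !qscaleA (triform_aligned _ _ _ (erefl g)) gG aA cC.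
by congr qscale; field; rewrite nA nB nC.
Qed.

Lemma triform_large a b c : a <> qzero R -> b <> qzero R -> c <> qzero R ->
  exists x y z, qnorm2 x + qnorm2 y + qnorm2 z = 1 /\
    Num.sqrt ((qnorm2 a + qnorm2 b + qnorm2 c) / 4) < qnorm (triform a b c x y z).
Proof.
move=> a0 b0 c0; have [u [v [w [e [u1 v1 w1 e1 align]]]]] := phase_align a0 b0 c0.
have [t1 [t2 [t3 [t_unit large]]]] :=
  real_form_large (qnorm_gt0 a0) (qnorm_gt0 b0) (qnorm_gt0 c0).
exists (qscale t1 u), (qscale t2 v), (qscale t3 w); split.
  by rewrite !qnorm2_scale u1 v1 w1 !mulr1.
rewrite align /qnorm qnorm2_scale e1 mulr1 sqrtr_sqr.
by rewrite !qnorm_sqr in large; apply: lt_le_trans large (ler_norm _).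
Qed.

(* If a, b, c are all nonzero, W is not a disk: it contains a point of modulus
   r > s, but misses one of the real points r, -r (Re W is bounded by s on the
   side fixed by the sign of <ac, b>). *)
Lemma trirange_not_disk a b c : a <> qzero R -> b <> qzero R -> c <> qzero R ->
  ~ is_closed_disk0 (trirange a b c).
Proof.
move=> a0 b0 c0 [r [r0 disk]].
have [x [y [z [xyz large]]]] := triform_large a0 b0 c0.
set s := Num.sqrt _ in large.
have ga := qnorm2_gt0 a0; have gb := qnorm2_gt0 b0; have gc := qnorm2_gt0 c0.
have D0 : 0 < (qnorm2 a + qnorm2 b + qnorm2 c) / 4 by apply: divr_gt0 => //; lra.
have s0 : 0 < s by rewrite sqrtr_gt0.
have s2 : 4 * s ^+ 2 = qnorm2 a + qnorm2 b + qnorm2 c.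
  by rewrite sqr_sqrtr ?ltW //; field.
have P0 : 0 < qnorm2 b + qnorm2 c by lra.
have s_lt_r : s < r by apply: lt_le_trans large _; apply/disk; exists x, y, z.
case: (lerP (qdot (qmul a c) b) 0) => acb.
  have [x' [y' [z' [xyz' val_r]]]] : trirange a b c (Quat r 0 0 0).
    by apply/disk; rewrite qnorm_real ger0_norm.
  by have := re_triform_le x' y' z' s0 s2 P0 acb; rewrite val_r xyz' /=; lra.
have [x' [y' [z' [xyz' val_r]]]] : trirange a b c (Quat (- r) 0 0 0).
  by apply/disk; rewrite qnorm_real normrN ger0_norm.
by have := re_triform_ge x' y' z' s0 s2 P0 (ltW acb); rewrite val_r xyz' /=; lra.
Qed.

Lemma trirange_disk_iff a b c :
  is_closed_disk0 (trirange a b c) <-> a = qzero R \/ b = qzero R \/ c = qzero R.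
Proof.
split=> [disk|[->|[->|->]]]; last first.
- exact: trirange_disk_c0.
- exact: trirange_disk_b0.
- exact: trirange_disk_a0.
case: (eqVneq a (qzero R)) => [|/eqP a0]; first by left.
case: (eqVneq b (qzero R)) => [|/eqP b0]; first by right; left.
case: (eqVneq c (qzero R)) => [|/eqP c0]; first by right; right.
by case: (trirange_not_disk a0 b0 c0).
Qed.

End LargeValue.

Theorem theorem5p1 (R : rcfType) (A : 'M[quat R]_3) :
  strictly_upper A ->
  (is_closed_disk0 (numrange A) <-> cycle_free A) /\
  (cycle_free A <-> qmul (qmul (A i1 i2) (A i1 i3)) (A i2 i3) = qzero R).
Proof.
move=> Aup; rewrite (cycle_free_upper3 Aup) !qmul_eq0.
have W_trirange : is_closed_disk0 (numrange A) <->
                  is_closed_disk0 (trirange (A i1 i2) (A i1 i3) (A i2 i3)).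
  by split; apply: disk_ext => q; rewrite (numrange_upper3 _ Aup).
by rewrite W_trirange trirange_disk_iff; tauto.
Qed.
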